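(* Assume $A$ contains at least one prime element and that $U(A)$ is finite. Then every $x\in A\setminus(U(A)\cup\{0\})$ such that $\mathcal D(x)$ is finite has a prime divisor, i.e. there is a prime $p\in A$ with $p\mid x$.
   Context: Let $\mathbb F$ be a subfield of $\mathbb C$ with a norm (absolute value) $\|\cdot\|_{\mathbb F}$, and $A$ a subring of $\mathbb F$ containing $1$ (hence an integral domain). $U(A)$ is the unit group of $A$; $d\mid x$ means $x=dc$ for some $c\in A$; $\mathcal D(x)=\{d\in A:d\mid x\}$; $xU(A)=\{xu:u\in U(A)\}$. $N:A\to\mathbb F\cap\mathbb R$ is a map with $N(a)\neq0$ for all nonzero $a\in A$ and satisfying: for all $x\in A$, $N(x)\in A$, $\mathcal D(N(x))=\mathcal D(x)$ and $N(N(x))=N(x)$; for all $x,y\in A$ there is $z\in A$ with $N(x)+N(y)=N(z)$; $N(-x)=N(x)$; $N(xy)=N(x)N(y)$; $\|N(x)\|_{\mathbb F}=N(x)$; for every $x\ne0$ there is $x'\in\mathbb F\cap\mathbb R$ with $N(x)^2=xx'\in A$. An element $p\in A$ is irreducible if $p\notin U(A)\cup\{0\}$ and $\mathcal D(p)=U(A)\cup pU(A)$; it is prime if it is irreducible and $N(p)=p$. *)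

(* The complex numbers are modelled by an arbitrary
   numClosedFieldType C (an algebraically closed field with conjugation,
   order on the reals and norm), subsets of C by predicates C -> Prop. *)
From HB Require Import structures.
From mathcomp Require Import all_boot all_order all_algebra.
Set Implicit Arguments. Unset Strict Implicit. Unset Printing Implicit Defensive.
Import Order.TTheory GRing.Theory Num.Theory.
Local Open Scope ring_scope.

Section Defs.
Variable C : numClosedFieldType.

Definition is_subfield (F : C -> Prop) : Prop :=
  [/\ F 0, F 1, (forall x y, F x -> F y -> F (x - y)),
      (forall x y, F x -> F y -> F (x * y)) &
      (forall x, F x -> x != 0 -> F x^-1)].

Definition is_absval (F : C -> Prop) (normF : C -> C) : Prop :=
  forall x y, F x -> F y ->
    [/\ normF x \is Num.real, 0 <= normF x, (normF x = 0 <-> x = 0),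
        normF (x * y) = normF x * normF y &
        normF (x + y) <= normF x + normF y].

Definition is_subring_of (F A : C -> Prop) : Prop :=
  [/\ (forall x, A x -> F x), A 1,
      (forall x y, A x -> A y -> A (x - y)) &
      (forall x y, A x -> A y -> A (x * y))].

Variable A : C -> Prop.

Definition dvdA (d x : C) : Prop := exists c, A c /\ x = d * c.

Definition unitA (u : C) : Prop := A u /\ exists v, A v /\ u * v = 1.

Definition inD (x d : C) : Prop := A d /\ dvdA d x.

Definition finite_set (S : C -> Prop) : Prop :=
  exists s : seq C, forall y, S y -> y \in s.

Definition irreducibleA (p : C) : Prop :=
  [/\ A p, ~ unitA p, p <> 0 &
      forall d, inD p d <-> (unitA d \/ exists u, unitA u /\ d = p * u)].

Variable N : C -> C.

Definition primeA (p : C) : Prop := irreducibleA p /\ N p = p.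

Definition is_N_map (F : C -> Prop) (normF : C -> C) : Prop :=
  (forall x, A x -> F (N x) /\ N x \is Num.real) /\
  (forall a, A a -> a <> 0 -> N a <> 0) /\
  (forall x, A x -> A (N x)) /\
  (forall x d, A x -> (inD (N x) d <-> inD x d)) /\
  (forall x, A x -> N (N x) = N x) /\
  (forall x y, A x -> A y -> exists z, A z /\ N x + N y = N z) /\
  (forall x, A x -> N (- x) = N x) /\
  (forall x y, A x -> A y -> N (x * y) = N x * N y) /\
  (forall x, A x -> normF (N x) = N x) /\
  (forall x, A x -> x <> 0 -> exists x', F x' /\ x' \is Num.real /\
                                 N x ^+ 2 = x * x' /\ A (x * x')).
End Defs.

(* The argument has two independent halves.
   1. Pure divisibility in A: if D(x) is finite then x has an irreducible
      divisor.  If x is not irreducible it has a divisor e which is neither a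
      unit nor an associate of x; then D(e) is contained in D(x) \ {x}, so
      induction on the size of a list covering D(x) applies to e.
   2. The norm N turns irreducibles into primes: since D(N q) = D(q), the
      elements q and N q divide each other, so N q is an associate q * u of
      the irreducible q.  Associates of irreducibles are irreducible, and
      N (N q) = N q, hence N q is a prime dividing q, and thus x. *)
From Stdlib Require Import Classical.
From HB Require Import structures.
From mathcomp Require Import all_boot all_order all_algebra.
From mathcomp Require Import zify.
Set Implicit Arguments. Unset Strict Implicit. Unset Printing Implicit Defensive.
Import Order.TTheory GRing.Theory Num.Theory.
Local Open Scope ring_scope.

Lemma size_filter_predC1_lt (T : eqType) (x : T) (s : seq T) :
  x \in s -> (size (filter (predC1 x) s) < size s)%N.
Proof.
move=> xs; rewrite size_filter -(count_predC (pred1 x) s).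
have : (0 < count (pred1 x) s)%N by rewrite -has_count has_pred1.
have -> : count (predC (pred1 x)) s = count (predC1 x) s by apply: eq_count.
lia.
Qed.

Section Divisibility.
Variables (C : numClosedFieldType) (A : C -> Prop).
Hypothesis hA1 : A 1.
Hypothesis hAM : forall x y, A x -> A y -> A (x * y).

Definition associateA (p d : C) : Prop := exists u, unitA A u /\ d = p * u.

Lemma dvdA_refl (x : C) : dvdA A x x.
Proof. by exists 1; rewrite mulr1. Qed.

Lemma dvdA_trans (a b c : C) : dvdA A a b -> dvdA A b c -> dvdA A a c.
Proof.
move=> [u [Au ->]] [v [Av ->]]; exists (u * v); split; first exact: hAM.
by rewrite mulrA.
Qed.

Lemma inD_refl (x : C) : A x -> inD A x x.
Proof. by move=> Ax; split=> //; apply: dvdA_refl. Qed.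

Lemma inD_dvdA (x y d : C) : inD A x d -> dvdA A x y -> inD A y d.
Proof. by move=> [Ad dx] xy; split=> //; apply: dvdA_trans dx xy. Qed.

Lemma unitA_neq0 (u : C) : unitA A u -> u <> 0.
Proof.
move=> [_ [v [_ uv]]] u0; move: uv.
by rewrite u0 mul0r => /eqP; rewrite eq_sym oner_eq0.
Qed.

Lemma unitA_mul (u w : C) : unitA A u -> unitA A w -> unitA A (u * w).
Proof.
move=> [Au [u' [Au' uu']]] [Aw [w' [Aw' ww']]]; split; first exact: hAM.
exists (w' * u'); split; first exact: hAM.
by rewrite mulrA -(mulrA u) ww' mulr1.
Qed.

Lemma unitA_inv (u : C) : unitA A u -> exists v, unitA A v /\ u * v = 1.
Proof.
move=> [Au [v [Av uv]]]; exists v; split=> //.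
by split=> //; exists u; split=> //; rewrite mulrC.
Qed.

Lemma dvdA_unitA (e u : C) : A e -> dvdA A e u -> unitA A u -> unitA A e.
Proof.
move=> Ae [c [Ac ->]] [_ [v [Av ecv]]]; split=> //.
by exists (c * v); split; [exact: hAM | rewrite mulrA].
Qed.

Lemma associateA_dvdA (p d : C) : associateA p d -> dvdA A d p.
Proof.
move=> [u [Uu ->]]; have [v [[Av _] uv]] := unitA_inv Uu.
by exists v; split=> //; rewrite -mulrA uv mulr1.
Qed.

(* Units and associates of d always divide d: this is the trivial half of
   the definition of irreducibility. *)
Lemma unit_or_associate_inD (d e : C) :
  A d -> unitA A e \/ associateA d e -> inD A d e.
Proof.
move=> Ad [[Ae [v [Av ev]]]|de].
  split=> //; exists (v * d); split; first exact: hAM.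
  by rewrite mulrA ev mul1r.
split; last exact: associateA_dvdA.
by have [u [[Au _] ->]] := de; apply: hAM.
Qed.

Lemma irreducibleA_associate (p d : C) :
  irreducibleA A p -> associateA p d -> irreducibleA A d.
Proof.
move=> [Ap nUp p0 Dp] pd; have d_dvd_p := associateA_dvdA pd.
have [u [Uu du]] := pd; have [v [Uv uv]] := unitA_inv Uu.
have [[Au _] [Av _]] := (Uu, Uv).
have p_dvd_d : dvdA A p d by exists u; split.
split.
- by rewrite du; apply: hAM.
- by move=> Ud; apply: nUp; apply: dvdA_unitA p_dvd_d Ud.
- by rewrite du => /eqP; rewrite mulf_eq0 => /orP[] /eqP; [|apply: unitA_neq0].
move=> e; split.
  move=> /inD_dvdA /(_ d_dvd_p) /Dp [Ue|[w [Uw ew]]]; first by left.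
  right; exists (v * w); split; first exact: unitA_mul.
  by rewrite ew du -mulrA (mulrA u) uv mul1r.
move=> [Ue|[w [Uw ew]]]; apply: inD_dvdA p_dvd_d; apply/Dp; first by left.
by right; exists (u * w); split; [apply: unitA_mul | rewrite ew du mulrA].
Qed.

(* A non-zero non-unit d which is not irreducible has a divisor e which is a
   non-zero non-unit and is not divisible by d; hence D(e) omits d. *)
Lemma proper_divisor (d : C) :
  A d -> ~ unitA A d -> d <> 0 -> ~ irreducibleA A d ->
  exists e, [/\ inD A d e, ~ unitA A e, e <> 0 & ~ inD A e d].
Proof.
move=> Ad nUd d0 nId.
have [e [De [nUe nAde]]] :
    exists e, inD A d e /\ ~ unitA A e /\ ~ associateA d e.
  apply: NNPP => H; apply: nId; split=> // e; split; last exact: unit_or_associate_inD.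
  move=> De; apply: NNPP => He; apply: H; exists e; split=> //.
  by split=> H'; apply: He; [left|right].
have [Ae [c [Ac dc]]] := De.
exists e; split=> //.
  by move=> e0; apply: d0; rewrite dc e0 mul0r.
move=> [_ [c' [Ac' ec']]]; apply: nAde; exists c'; split=> //.
split=> //; exists c; split=> //.
apply: (mulfI (x:=d)); first by apply/eqP.
by rewrite mulr1 mulrA -ec' -dc.
Qed.

Lemma irreducible_divisor_bounded (n : nat) (d : C) (s : seq C) :
  A d -> ~ unitA A d -> d <> 0 -> (forall y, inD A d y -> y \in s) ->
  (size s <= n)%N -> exists q, irreducibleA A q /\ dvdA A q d.
Proof.
elim: n d s => [|n IH] d s Ad nUd d0 cover.
  by rewrite leqn0 => /nilP s0; move: (cover d (inD_refl Ad)); rewrite s0.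
move=> size_s.
case: (classic (irreducibleA A d)) => [Id|nId].
  by exists d; split=> //; apply: dvdA_refl.
have [e [[Ae ed] nUe e0 nDe]] := proper_divisor Ad nUd d0 nId.
have [q [Iq qe]] : exists q, irreducibleA A q /\ dvdA A q e.
  apply: (IH e (filter (predC1 d) s)) => //.
  - move=> y De; rewrite mem_filter; apply/andP; split.
      by apply/eqP=> yd; apply: nDe; rewrite -yd.
    exact/cover/(inD_dvdA De ed).
  - rewrite -ltnS; apply: leq_trans size_s.
    exact/size_filter_predC1_lt/cover/inD_refl.
by exists q; split=> //; apply: dvdA_trans qe ed.
Qed.

Lemma irreducible_divisor (x : C) :
  A x -> ~ unitA A x -> x <> 0 -> finite_set (inD A x) ->
  exists q, irreducibleA A q /\ dvdA A q x.
Proof.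
move=> Ax nUx x0 [s cover].
exact: irreducible_divisor_bounded cover (leqnn _).
Qed.

Section NormMap.
Variable N : C -> C.
Hypothesis hAN : forall x, A x -> A (N x).
Hypothesis hD : forall x d, A x -> (inD A (N x) d <-> inD A x d).
Hypothesis hNN : forall x, A x -> N (N x) = N x.

Lemma norm_irreducible_prime (q : C) :
  irreducibleA A q -> primeA A N (N q) /\ dvdA A (N q) q.
Proof.
move=> Iq; have [Aq nUq _ Dq] := Iq; have ANq := hAN Aq.
have q_Nq : inD A q (N q) by apply/(hD (N q) Aq)/inD_refl.
have [_ q_dvd_Nq] : inD A (N q) q by apply/(hD q Aq)/inD_refl.
have nUNq : ~ unitA A (N q).
  by move=> UNq; apply: nUq; apply: dvdA_unitA q_dvd_Nq UNq.
have assoc : associateA q (N q).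
  by case: (proj1 (Dq (N q)) q_Nq) => // /nUNq.
split; last exact: associateA_dvdA assoc.
by split; [apply: irreducibleA_associate assoc | apply: hNN].
Qed.

End NormMap.
End Divisibility.

Theorem mainTheorem8 (C : numClosedFieldType) (F : C -> Prop) (normF : C -> C)
    (A : C -> Prop) (N : C -> C)
    (hF : is_subfield F) (hnorm : is_absval F normF) (hA : is_subring_of F A)
    (hN : is_N_map A N F normF)
    (hprime : exists p, primeA A N p)
    (hU : finite_set (unitA A)) :
  forall x, A x -> ~ unitA A x -> x <> 0 -> finite_set (inD A x) ->
    exists p, primeA A N p /\ dvdA A p x.
Proof.
case: hA => _ hA1 _ hAM; case: hN => _ [_ [hAN [hD [hNN _]]]].
move=> x Ax nUx x0 finDx.
have [q [Iq qx]] := irreducible_divisor hA1 hAM Ax nUx x0 finDx.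
have [PNq Nq_q] := norm_irreducible_prime hA1 hAM hAN hD hNN Iq.
by exists (N q); split=> //; apply: dvdA_trans Nq_q qx.
Qed.
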